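(* Let $p,q,r,n$ be integers with $r\ge 0$, $q\ge 2$, $p-q=2r+1$, $n=p+q$, and suppose $q\le 2r$. Then the integrality gap of the clique-web inequality with parameters $n,p,q,r$ is at most $3$, i.e. $\mathrm{sdp}(\mathrm{CW}^r_p,-e)/\mathrm{ip}(\mathrm{CW}^r_p,-e)\le 3$.
   Context: For integers $p,r$ with $p\ge 2r+3$, the antiweb $\mathrm{AW}^r_p$ is the graph on $[p]$ with edges $\{i,i+s\}$ for $i\in[p]$, $1\le s\le r$ (indices mod $p$); the web $\mathrm{W}^r_p$ is its complement in $K_p$. With $p,q,r,n$ as in the claim, $\mathrm{CW}^r_p$ is the graph on $[n]$ consisting of a clique on $\{1,\dots,q\}$, a copy of $\mathrm{W}^r_p$ on $\{q+1,\dots,n\}$, and all edges $ij$ with $1\le i\le q<j\le n$. The clique-web inequality is $-\sum_{ij\in E(\mathrm{CW}^r_p)}x_{ij}\le q(r+1)$. For a graph $G=([n],E)$ and $w\in\mathbb{R}^E$, $\mathrm{ip}(G,w)=\max_{x\in\{\pm1\}^n}\sum_{ij\in E}w_{ij}x_ix_j$ and $\mathrm{sdp}(G,w)=\max\sum_{ij\in E}w_{ij}u_i^Tu_j$ over unit vectors $u_i\in\mathbb{R}^n$; $e$ denotes the all-ones vector in $\mathbb{R}^{E(\mathrm{CW}^r_p)}$. The integrality gap of the clique-web inequality is $\mathrm{sdp}(\mathrm{CW}^r_p,-e)/\mathrm{ip}(\mathrm{CW}^r_p,-e)$, where $\mathrm{ip}(\mathrm{CW}^r_p,-e)=q(r+1)$.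 *)

From HB Require Import structures.
From mathcomp Require Import all_boot all_order all_algebra.
From mathcomp Require Import boolp classical_sets reals.
Set Implicit Arguments. Unset Strict Implicit. Unset Printing Implicit Defensive.
Import Order.TTheory GRing.Theory Num.Theory.
Local Open Scope ring_scope.
Local Open Scope classical_set_scope.

(* Vertices are 0-indexed: [n] = {1..n} is rendered as 'I_n = {0..n-1}. *)

Definition cdist (p a b : nat) : nat :=
  let d := if (a <= b)%N then (b - a)%N else (a - b)%N in minn d (p - d).

(* antiweb AW^r_p on {0..p-1}: edges {i, i+s mod p}, 1 <= s <= r *)
Definition antiweb_adj (p r a b : nat) : bool :=
  (0 < cdist p a b)%N && (cdist p a b <= r)%N.

Definition web_adj (p r a b : nat) : bool :=
  (a != b) && ~~ antiweb_adj p r a b.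

(* clique-web CW^r_p on 'I_n: clique on {0..q-1}, web on {q..n-1}
   (vertex i >= q is web vertex i - q), all edges between the two parts. *)
Definition CW_adj (n q p r : nat) : rel 'I_n :=
  fun i j => (i != j) &&
    (if ((i < q)%N || (j < q)%N) then true else web_adj p r (i - q) (j - q)).

Definition edge_sum (R : realType) (n : nat) (adj : rel 'I_n)
  (w : 'I_n -> 'I_n -> R) (f : 'I_n -> 'I_n -> R) : R :=
  \sum_(i < n) \sum_(j < n | (i < j)%N && adj i j) w i j * f i j.

Definition ip (R : realType) (n : nat) (adj : rel 'I_n) (w : 'I_n -> 'I_n -> R) : R :=
  sup [set v : R | exists x : 'I_n -> R,
         (forall i, x i = 1 \/ x i = -1) /\ v = edge_sum adj w (fun i j => x i * x j)].

Definition sdp (R : realType) (n : nat) (adj : rel 'I_n) (w : 'I_n -> 'I_n -> R) : R :=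
  sup [set v : R | exists u : 'I_n -> 'rV[R]_n,
         (forall i, \sum_(k < n) (u i 0 k) ^+ 2 = 1) /\
         v = edge_sum adj w (fun i j => \sum_(k < n) u i 0 k * u j 0 k)].

Definition minus_e (R : realType) (n : nat) : 'I_n -> 'I_n -> R := fun _ _ => -1.

From HB Require Import structures.
From mathcomp Require Import all_boot all_order all_algebra.
From mathcomp Require Import boolp classical_sets reals.
From mathcomp Require Import zify ring lra.
Import Order.TTheory GRing.Theory Num.Theory.
Set Implicit Arguments. Unset Strict Implicit.

(* With p = q + 2r + 1 every web vertex has at most q web neighbours.  Given
   unit vectors u_i with Gram matrix G, weight the clique vertices by p and the
   web vertices by q, so that 0 <= |sum_i c_i u_i|^2 = sum_ij c_i c_j G_ij.
   Adding pq times the sum of G over the ordered edges, each entry is bounded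
   below by minus an explicit slack, since it is a nonnegative combination of
   1 - G_ij and 1 + G_ij; summing the slack (using the degree bound and
   q <= 2r) gives -sum_E G_ij <= (3r + 2) q.  The cut separating the clique
   from the web has value at least q (r + 1), and (3r + 2) / (r + 1) <= 3. *)

(* [a - r + s] modulo [p], the [s]-th vertex of the closed [r]-ball around [a]
   in the cycle on [p] vertices, written so that [lia] can reason about it. *)
Definition cball_vertex (p r a s : nat) : nat :=
  if (a + s < r)%N then (a + s + p - r)%N
  else if (a + s - r < p)%N then (a + s - r)%N else (a + s - r - p)%N.

Section ClosedBall.
Variables (p r a : nat).
Hypotheses (a_lt_p : (a < p)%N) (ball_le_p : (2 * r + 1 <= p)%N).

Lemma cball_vertex_lt s : (s < 2 * r + 1)%N -> (cball_vertex p r a s < p)%N.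
Proof. by rewrite /cball_vertex; repeat case: ifP; lia. Qed.

Lemma cdist_cball_vertex s :
  (s < 2 * r + 1)%N -> (cdist p a (cball_vertex p r a s) <= r)%N.
Proof. by rewrite /cball_vertex /cdist; repeat case: ifP; lia. Qed.

Lemma cball_vertex_inj s t : (s < 2 * r + 1)%N -> (t < 2 * r + 1)%N ->
  cball_vertex p r a s = cball_vertex p r a t -> s = t.
Proof. by rewrite /cball_vertex; repeat case: ifP; lia. Qed.

End ClosedBall.

Lemma cdist_gt0 p a b : (a < p)%N -> (b < p)%N -> a != b -> (0 < cdist p a b)%N.
Proof. by move=> ha hb /eqP neq_ab; rewrite /cdist; case: ifP; lia. Qed.

Lemma cdistC p a b : cdist p a b = cdist p b a.
Proof. by rewrite /cdist; do 2 case: ifP; lia. Qed.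

Lemma card_web_nbrs_le p r (a : 'I_p) : (2 * r + 1 <= p)%N ->
  (#|[pred b : 'I_p | web_adj p r a b]| <= p - (2 * r + 1))%N.
Proof.
move=> ball_le_p.
pose ball := [set b : 'I_p | (cdist p a b <= r)%N].
pose f (s : 'I_(2 * r + 1)) : 'I_p := insubd a (cball_vertex p r a s).
have val_f s : val (f s) = cball_vertex p r a s.
  by rewrite /f val_insubd cball_vertex_lt.
have f_inj : injective f.
  move=> s t /(congr1 val); rewrite !val_f => /cball_vertex_inj eq_st.
  by apply/val_inj/eq_st.
have card_ball : (2 * r + 1 <= #|ball|)%N.
  have : f @: [set: 'I_(2 * r + 1)] \subset ball.
    by apply/fintype.subsetP => _ /imsetP [s _ ->]; rewrite inE val_f cdist_cball_vertex.
  by move/subset_leq_card; rewrite card_imset // cardsT card_ord.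
have web_sub : [pred b : 'I_p | web_adj p r a b] \subset ~: ball.
  apply/fintype.subsetP => b; rewrite !inE /web_adj /antiweb_adj => /andP [neq_ab].
  by rewrite cdist_gt0.
move: card_ball (subset_leq_card web_sub) (cardsC ball); rewrite card_ord.
set n_ball := #|ball|; set n_out := #|~: ball|; set n_web := #|[pred b | _]|; lia.
Qed.

Local Open Scope ring_scope.

Section Sums.
Variable R : realType.

Lemma sumr_indicator (T : finType) (b : pred T) (c : R) :
  \sum_(i : T) (b i)%:R * c = c *+ #|b|.
Proof.
rewrite -sumr_const [RHS]big_mkcond /=; apply: eq_bigr => i _.
by rewrite unfold_in; case: (b i); rewrite ?mul1r ?mul0r.
Qed.

Lemma sumr_pred1 (T : finType) (x : T) (c : R) : \sum_(y : T) (x == y)%:R * c = c.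
Proof.
rewrite -[RHS]mulr1n -(card1 x) -sumr_indicator.
by apply: eq_bigr => y _; rewrite /= eq_sym.
Qed.

Lemma sum_sym_rel N (P : rel 'I_N) (F : 'I_N -> 'I_N -> R) :
  symmetric P -> irreflexive P -> (forall i j, F i j = F j i) ->
  \sum_(i : 'I_N) \sum_(j | P i j) F i j =
  (\sum_(i : 'I_N) \sum_(j : 'I_N | (i < j)%N && P i j) F i j) *+ 2.
Proof.
move=> P_sym P_irr F_sym.
have split_row i : \sum_(j | P i j) F i j =
    \sum_(j : 'I_N | (i < j)%N && P i j) F i j + \sum_(j : 'I_N | (j < i)%N && P i j) F i j.
  rewrite (bigID (fun j : 'I_N => (i < j)%N)) /=; congr (_ + _); apply: eq_bigl => j.
    by rewrite andbC.
  case: ltngtP => [||/val_inj eq_ij]; rewrite ?andbT ?andbF //=.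
  by rewrite eq_ij P_irr.
rewrite mulr2n (eq_bigr _ (fun i _ => split_row i)) big_split /=; congr (_ + _).
under eq_bigr do rewrite big_mkcond.
rewrite exchange_big; apply: eq_bigr => i _; rewrite [RHS]big_mkcond.
by apply: eq_bigr => j _; rewrite P_sym F_sym.
Qed.

Lemma edge_sum_minus_e N (adj : rel 'I_N) (f : 'I_N -> 'I_N -> R) :
  edge_sum adj (@minus_e R N) f =
  - \sum_(i : 'I_N) \sum_(j : 'I_N | (i < j)%N && adj i j) f i j.
Proof.
rewrite /edge_sum /minus_e -sumrN; apply: eq_bigr => i _.
by rewrite -sumrN; apply: eq_bigr => j _; rewrite mulN1r.
Qed.

End Sums.

Section Gram.
Variables (R : realType) (N : nat) (u : 'I_N -> 'rV[R]_N).

Definition gram i j : R := \sum_(k < N) u i 0 k * u j 0 k.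

Lemma gramC i j : gram i j = gram j i.
Proof. by apply: eq_bigr => k _; rewrite mulrC. Qed.

Lemma gram_quad_ge0 (c : 'I_N -> R) : 0 <= \sum_i \sum_j c i * c j * gram i j.
Proof.
have -> : \sum_i \sum_j c i * c j * gram i j = \sum_(k < N) (\sum_i c i * u i 0 k) ^+ 2.
  symmetry; under eq_bigr do rewrite expr2 mulr_suml.
  rewrite exchange_big; apply: eq_bigr => i _.
  under eq_bigr do rewrite mulr_sumr.
  rewrite exchange_big; apply: eq_bigr => j _.
  by rewrite /gram mulr_sumr; apply: eq_bigr => k _; ring.
by apply: sumr_ge0 => k _; apply: sqr_ge0.
Qed.

Hypothesis u_unit : forall i, \sum_(k < N) (u i 0 k) ^+ 2 = 1.

Lemma gram_diag i : gram i i = 1.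
Proof. by rewrite -(u_unit i); apply: eq_bigr => k _; rewrite expr2. Qed.

Lemma gram_bound i j : -1 <= gram i j <= 1.
Proof.
pose d (s : R) := \sum_(k < N) (u i 0 k + s * u j 0 k) ^+ 2.
have d_ge0 s : 0 <= d s by apply: sumr_ge0 => k _; apply: sqr_ge0.
have dE s : d s = \sum_(k < N) (u i 0 k) ^+ 2 + s ^+ 2 * \sum_(k < N) (u j 0 k) ^+ 2
                 + 2 * s * gram i j.
  by rewrite /d /gram !mulr_sumr -!big_split /=; apply: eq_bigr => k _; ring.
move: (d_ge0 1) (d_ge0 (-1)); rewrite !dE !u_unit sqrrN expr1n.
by move=> h1 h2; apply/andP; split; lra.
Qed.

End Gram.

Section Relaxations.
Variables (R : realType) (N : nat) (adj : rel 'I_N) (w : 'I_N -> 'I_N -> R).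

Lemma sdp_le_ub (b : R) :
  (forall u : 'I_N -> 'rV[R]_N, (forall i, \sum_(k < N) (u i 0 k) ^+ 2 = 1) ->
     edge_sum adj w (gram u) <= b) ->
  sdp adj w <= b.
Proof.
move=> ub; apply: ge_sup; last by move=> _ [u [u_unit ->]]; apply: ub.
pose e (i : 'I_N) : 'rV[R]_N := \row_k (k == i)%:R.
exists (edge_sum adj w (gram e)), e; split=> // i.
rewrite -(sumr_pred1 i 1); apply: eq_bigr => k _; rewrite mxE eq_sym.
by case: (i == k); rewrite expr2 ?mulr1 ?mul0r.
Qed.

Lemma ip_ge_value (x : 'I_N -> R) : (forall i, x i = 1 \/ x i = -1) ->
  edge_sum adj w (fun i j => x i * x j) <= ip adj w.
Proof.
move=> x_pm1; apply: sup_upper_bound; last by exists x.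
split; first by exists (edge_sum adj w (fun i j => x i * x j)), x.
exists (\sum_i \sum_j `|w i j|) => _ [y [y_pm1 ->]].
apply: ler_sum => i _.
rewrite [leRHS](bigID (fun j : 'I_N => (i < j)%N && adj i j)) /= -[leLHS]addr0.
apply: lerD; last by apply: sumr_ge0 => j _.
apply: ler_sum => j _; apply: le_trans (ler_norm _) _.
by rewrite !normrM; case: (y_pm1 i) => ->; case: (y_pm1 j) => ->; rewrite ?normrN normr1 !mulr1.
Qed.

End Relaxations.

Lemma CW_adj_sym N q p r : symmetric (@CW_adj N q p r).
Proof.
move=> i j; rewrite /CW_adj eq_sym orbC /web_adj /antiweb_adj cdistC.
by case: (i =P j) => [->|_] //=; rewrite (eq_sym (j - q)%N).
Qed.

Lemma CW_adj_irr N q p r : irreflexive (@CW_adj N q p r).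
Proof. by move=> i; rewrite /CW_adj eqxx. Qed.

Lemma rshift_ltnF m n (k : 'I_n) : (rshift m k < m)%N = false.
Proof. by rewrite ltnNge leq_addr. Qed.

Section CliqueWeb.
Variables (q p r : nat).
Local Notation cw := (@CW_adj (q + p) q p r).

Lemma cw_clique_clique (x y : 'I_q) : cw (lshift p x) (lshift p y) = (x != y).
Proof. by rewrite /CW_adj (inj_eq (@lshift_inj _ _)) /= ltn_ord andbT. Qed.

Lemma cw_clique_web (x : 'I_q) (k : 'I_p) : cw (lshift p x) (rshift q k).
Proof.
rewrite /CW_adj /= ltn_ord andbT; apply/eqP => /(congr1 val) /= eq_xk.
by have := ltn_ord x; rewrite eq_xk ltnNge leq_addr.
Qed.

Lemma cw_web_clique (k : 'I_p) (x : 'I_q) : cw (rshift q k) (lshift p x).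
Proof. by rewrite CW_adj_sym cw_clique_web. Qed.

Lemma cw_web_web (k l : 'I_p) : cw (rshift q k) (rshift q l) = web_adj p r k l.
Proof.
rewrite /CW_adj !rshift_ltnF /= !addKn (inj_eq (@rshift_inj _ _)) /web_adj.
by case: (k =P l) => [->|/eqP neq_kl]; rewrite ?eqxx //= neq_kl.
Qed.

Variable R : realType.
Local Notation P := (p%:R : R).
Local Notation Q := (q%:R : R).

Definition cw_weight (i : 'I_(q + p)) : R := if (i < q)%N then P else Q.

Definition cw_slack (i j : 'I_(q + p)) : R :=
  if (i < q)%N then (if (j < q)%N then P * (P - Q) + (i == j)%:R * (P * Q) else 0)
  else if (j < q)%N then 0 else Q ^+ 2 + (cw i j)%:R * (P * Q - 2 * Q ^+ 2).

Lemma cw_slack_entry_ge0 (i j : 'I_(q + p)) (g : R) :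
  (q <= p)%N -> -1 <= g <= 1 -> (i = j -> g = 1) ->
  0 <= P * Q * (if cw i j then g else 0) - cw_weight i * cw_weight j * g + cw_slack i j.
Proof.
move=> le_qp /andP [ge_g le_g] diag_g.
have Q_ge0 : 0 <= Q by rewrite ler0n.
have PQ_ge0 : 0 <= P - Q by rewrite subr_ge0 ler_nat.
rewrite /cw_weight /cw_slack; case: (eqVneq i j) => [eq_ij | neq_ij].
  rewrite -eq_ij CW_adj_irr diag_g //.
  by case: (i < q)%N; rewrite /= mulr0 mulr1 ?mul1r ?mul0r ?addr0; lra.
rewrite /CW_adj neq_ij /= ?mulr0n ?addr0.
have g1 : 0 <= 1 - g by lra.
have g2 : 0 <= g + 1 by lra.
case: (i < q)%N; case: (j < q)%N => /=.
- have := mulr_ge0 (mulr_ge0 (ler0n R p) PQ_ge0) g1; nra.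
- nra.
- nra.
- case: web_adj => /=.
  + have := mulr_ge0 (mulr_ge0 Q_ge0 PQ_ge0) g2; nra.
  + have := mulr_ge0 (mulr_ge0 Q_ge0 Q_ge0) g1; nra.
Qed.

Hypothesis p_def : p = (q + 2 * r + 1)%N.

Lemma web_degree_le (k : 'I_p) : (#|[pred l : 'I_p | web_adj p r k l]| <= q)%N.
Proof. by apply: leq_trans (card_web_nbrs_le k _) _; lia. Qed.

Lemma cw_slack_clique_row (x : 'I_q) :
  \sum_j cw_slack (lshift p x) j = Q * (P * (P - Q)) + P * Q.
Proof.
rewrite big_split_ord /= [X in _ + X]big1 ?addr0; last first.
  by move=> k _; rewrite /cw_slack /= ltn_ord rshift_ltnF.
rewrite (eq_bigr (fun y => P * (P - Q) + (x == y)%:R * (P * Q))); last first.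
  by move=> y _; rewrite /cw_slack /= !ltn_ord (inj_eq (@lshift_inj _ _)).
by rewrite big_split /= sumr_const card_ord sumr_pred1 [in RHS]mulr_natl.
Qed.

Lemma cw_slack_web_row_le (k : 'I_p) : (q <= 2 * r)%N ->
  \sum_j cw_slack (rshift q k) j <= P * Q ^+ 2 + Q * (P * Q - 2 * Q ^+ 2).
Proof.
move=> le_q2r.
have PQ_ge0 : 0 <= P * Q - 2 * Q ^+ 2.
  have -> : P * Q - 2 * Q ^+ 2 = (P - 2 * Q) * Q by ring.
  by rewrite mulr_ge0 // subr_ge0 -natrM ler_nat; lia.
rewrite big_split_ord /= big1 ?add0r; last first.
  by move=> y _; rewrite /cw_slack /= rshift_ltnF ltn_ord.
rewrite (eq_bigr (fun l : 'I_p => Q ^+ 2 + (web_adj p r k l)%:R * (P * Q - 2 * Q ^+ 2))); last first.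
  by move=> l _; rewrite /cw_slack /= !rshift_ltnF cw_web_web.
rewrite big_split /= sumr_const card_ord sumr_indicator [P * Q ^+ 2]mulr_natl lerD2l.
by rewrite [Q * (_ - _)]mulr_natl; apply: ler_wpMn2l PQ_ge0 _ _ (web_degree_le k).
Qed.

Lemma cw_slack_sum_le : (q <= 2 * r)%N ->
  \sum_i \sum_j cw_slack i j <= P * Q * (3 * P * Q - 3 * Q ^+ 2 + Q).
Proof.
move=> le_q2r; rewrite big_split_ord /=.
rewrite (eq_bigr _ (fun x _ => cw_slack_clique_row x)) sumr_const card_ord.
apply: (@le_trans _ _ ((Q * (P * (P - Q)) + P * Q) *+ q
                       + \sum_(k < p) (P * Q ^+ 2 + Q * (P * Q - 2 * Q ^+ 2)))).
  by rewrite lerD2l; apply: ler_sum => k _; apply: cw_slack_web_row_le.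
by rewrite sumr_const card_ord le_eqVlt; apply/orP; left; apply/eqP; ring.
Qed.

Lemma cw_sdp_value_le (u : 'I_(q + p) -> 'rV[R]_(q + p)) :
  (1 <= q)%N -> (q <= 2 * r)%N -> (forall i, \sum_(k < q + p) (u i 0 k) ^+ 2 = 1) ->
  edge_sum cw (@minus_e R _) (gram u) <= (3 * r + 2)%:R * Q.
Proof.
move=> q_gt0 le_q2r u_unit.
set X := \sum_(i : 'I_(q + p)) \sum_(j : 'I_(q + p) | (i < j)%N && cw i j) gram u i j.
pose H i j := P * Q * (if cw i j then gram u i j else 0)
    - cw_weight i * cw_weight j * gram u i j + cw_slack i j.
have H_ge0 i j : 0 <= H i j.
  apply: cw_slack_entry_ge0; [lia | exact: gram_bound | by move=> ->; apply: gram_diag].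
have edges_sum : \sum_i \sum_j P * Q * (if cw i j then gram u i j else 0) = P * Q * X *+ 2.
  rewrite -mulrnAr -(sum_sym_rel (@CW_adj_sym _ q p r) (@CW_adj_irr _ q p r) (gramC u)).
  by rewrite mulr_sumr; apply: eq_bigr => i _; rewrite [in RHS]big_mkcond mulr_sumr.
have : 0 <= \sum_i \sum_j H i j.
  by apply: sumr_ge0 => i _; apply: sumr_ge0 => j _; apply: H_ge0.
under eq_bigr do rewrite big_split sumrB /=.
rewrite big_split sumrB /= edges_sum => total_ge0.
have B_ge0 := gram_quad_ge0 u cw_weight.
have S_le := cw_slack_sum_le le_q2r.
have : 0 <= P * Q * (X *+ 2 + (3 * P * Q - 3 * Q ^+ 2 + Q)).
  by rewrite mulrDr; lra.
have PQ_gt0 : 0 < P * Q by rewrite -natrM ltr0n muln_gt0; apply/andP; split; lia.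
have P_eq : P = Q + 2 * r%:R + 1 by rewrite p_def natrD natrD natrM.
rewrite pmulr_rge0 // edge_sum_minus_e -/X P_eq natrD natrM.
by lra.
Qed.

Definition cw_cut (i : 'I_(q + p)) : R := if (i < q)%N then -1 else 1.

Lemma cw_cut_pm1 i : cw_cut i = 1 \/ cw_cut i = -1.
Proof. by rewrite /cw_cut; case: ifP; [right | left]. Qed.

Lemma cw_cut_clique_row (x : 'I_q) :
  \sum_(j | cw (lshift p x) j) cw_cut (lshift p x) * cw_cut j = Q - 1 - P.
Proof.
rewrite big_mkcond big_split_ord /=.
rewrite (eq_bigr (fun y => 1 - (x == y)%:R * 1)); last first.
  move=> y _; rewrite cw_clique_clique /cw_cut /= !ltn_ord mulrNN mulr1.
  by case: eqVneq => _; rewrite /= ?mulr1 ?subrr ?subr0.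
rewrite (eq_bigr (fun=> -1 : R)); last first.
  by move=> k _; rewrite cw_clique_web /cw_cut /= ltn_ord rshift_ltnF mulr1.
by rewrite sumrB sumr_pred1 !sumr_const !card_ord mulNrn addrAC.
Qed.

Lemma cw_cut_web_row_le (k : 'I_p) :
  \sum_(j | cw (rshift q k) j) cw_cut (rshift q k) * cw_cut j <= 0.
Proof.
rewrite big_mkcond big_split_ord /=.
rewrite (eq_bigr (fun=> -1 : R)); last first.
  by move=> y _; rewrite cw_web_clique /cw_cut rshift_ltnF /= ltn_ord mul1r.
rewrite (eq_bigr (fun l : 'I_p => (web_adj p r k l)%:R * 1)); last first.
  by move=> l _; rewrite cw_web_web /cw_cut !rshift_ltnF /=; case: web_adj; rewrite ?mulr1 ?mul0r.
rewrite sumr_const card_ord sumr_indicator mulNrn addrC subr_le0.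
by rewrite ler_wpMn2l // web_degree_le.
Qed.

Lemma cw_cut_value_ge : (1 <= q)%N ->
  Q * (r%:R + 1) <= edge_sum cw (@minus_e R _) (fun i j => cw_cut i * cw_cut j).
Proof.
move=> q_gt0.
have ordered_pairs : \sum_i \sum_(j | cw i j) cw_cut i * cw_cut j <= Q * (Q - 1 - P).
  rewrite big_split_ord /= (eq_bigr _ (fun x _ => cw_cut_clique_row x)).
  rewrite sumr_const card_ord -[leRHS]addr0 mulr_natl lerD2l.
  by apply: sumr_le0 => k _; apply: cw_cut_web_row_le.
rewrite (sum_sym_rel (@CW_adj_sym _ q p r) (@CW_adj_irr _ q p r)) in ordered_pairs; last first.
  by move=> i j; apply: mulrC.
have P_eq : P = Q + 2 * r%:R + 1 by rewrite p_def natrD natrD natrM.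
have Q_gt0 : 0 < Q by rewrite ltr0n.
rewrite edge_sum_minus_e; rewrite P_eq in ordered_pairs.
by nra.
Qed.

End CliqueWeb.

Theorem mainTheorem11 (R : realType) (p q r n : nat) :
  (2 <= q)%N -> p = (q + 2 * r + 1)%N -> n = (p + q)%N -> (q <= 2 * r)%N ->
  sdp (@CW_adj n q p r) (@minus_e R n) / ip (@CW_adj n q p r) (@minus_e R n) <= 3.
Proof.
move=> q_ge2 p_def n_def le_q2r.
have {n_def} -> : n = (q + p)%N by rewrite n_def addnC.
have q_gt0 : (1 <= q)%N by lia.
have sdp_le := sdp_le_ub (fun u => @cw_sdp_value_le q p r R p_def u q_gt0 le_q2r).
have ip_ge := le_trans (cw_cut_value_ge R p_def q_gt0) (ip_ge_value _ _ (cw_cut_pm1 _)).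
have Q_gt0 : 0 < (q%:R : R) by rewrite ltr0n.
rewrite ler_pdivrMr; last by apply: lt_le_trans ip_ge; rewrite mulr_gt0 // ltr_wpDl.
apply: le_trans sdp_le _; rewrite natrD natrM.
by nra.
Qed.
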